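(* Let $G=GL(\infty,F_2)\ltimes F_2^\infty$. The only normal subgroups of $G$ are $\{e\}$, $F_2^\infty$ and $G$.
   Context: $F_2$ is the field with two elements and $F_2^\infty=\bigoplus_{\mathbb N}F_2$ is the space of finitely supported column vectors (standard basis $e_1,e_2,\dots$), regarded as an abelian group under addition. $GL(\infty,F_2)$ is the group of invertible $\mathbb N\times\mathbb N$ matrices $M$ over $F_2$ with $M_{ij}\neq\delta_{ij}$ for only finitely many $(i,j)$, acting on $F_2^\infty$ by matrix multiplication. $G=GL(\infty,F_2)\ltimes F_2^\infty$ is the semidirect product with $gvg^{-1}=g(v)$ (this group is isomorphic to $\mathrm{Aut}_{\mathrm{fin}}(\mathbb Z_2^\infty)\ltimes\mathbb Z_2^\infty$). *)

From HB Require Import structures.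
From mathcomp Require Import all_boot all_order all_algebra.
From mathcomp Require Import boolp classical_sets functions cardinality fsbigop.
Set Implicit Arguments. Unset Strict Implicit. Unset Printing Implicit Defensive.
Import GRing.Theory.
Local Open Scope classical_set_scope.
Local Open Scope ring_scope.

Notation F2 := 'F_2.

(* N x N matrices and column vectors over F_2 (indices start at 0). *)
Definition infmx := nat -> nat -> F2.
Definition infvec := nat -> F2.

Definition mx1 : infmx := fun i j => (i == j)%:R.

Definition finitary (M : infmx) : Prop :=
  finite_set [set ij : nat * nat | M ij.1 ij.2 != mx1 ij.1 ij.2].

Definition finsupp (v : infvec) : Prop := finite_set [set i | v i != 0].

Definition mxmul (A B : infmx) : infmx :=
  fun i j => \sum_(k \in [set: nat]) A i k * B k j.
Definition mxact (A : infmx) (v : infvec) : infvec :=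
  fun i => \sum_(k \in [set: nat]) A i k * v k.
Definition vadd (v w : infvec) : infvec := fun i => v i + w i.
Definition v0 : infvec := fun _ => 0.

Definition GLinf (M : infmx) : Prop :=
  finitary M /\ exists M', finitary M' /\ mxmul M M' = mx1 /\ mxmul M' M = mx1.

(* G = GL(infinity,F_2) |x F_2^infinity; the element (M, v) stands for v.M,
   so that (M,v)(M',v') = v M v' M' = v (M v' M^-1) M M' = (M M', v + M v'). *)
Definition Gt := (infmx * infvec)%type.
Definition inG (g : Gt) : Prop := GLinf g.1 /\ finsupp g.2.
Definition Gmul (g h : Gt) : Gt := (mxmul g.1 h.1, vadd g.2 (mxact g.1 h.2)).
Definition Ge : Gt := (mx1, v0).

(* Normal subgroups of G (inverses expressed through the group law). *)
Definition normal_subgroup (N : set Gt) : Prop :=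
  [/\ N `<=` inG, N Ge,
      (forall a b, N a -> N b -> N (Gmul a b)),
      (forall a b, N a -> inG b -> Gmul a b = Ge -> N b) &
      (forall a g h, N a -> inG g -> inG h -> Gmul g h = Ge ->
                      N (Gmul (Gmul g a) h))].

Definition Vsub : set Gt := [set g | inG g /\ g.1 = mx1].

(* A nonzero translation in N, conjugated by an elementary transvection t_ab = 1 + e_a e_b^T and
   added back to itself, yields a basis vector e_a; hence N contains F_2^oo. If (M, v) in N has
   M <> 1, its commutator with a suitable translation e_j is a nonzero translation, and its
   commutator with t_pq, for q outside the support of M, is a transvection 1 + u e_q^T, which one
   more commutator turns into an elementary transvection. The Steinberg relation
   [t_ab, t_bc] = t_ac then puts every t_ab in N, and Gaussian elimination writes every finitary
   invertible matrix as a product of elementary transvections, so N = G. *)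

From mathcomp Require Import all_boot all_algebra.
From mathcomp Require Import boolp classical_sets cardinality fsbigop.
Set Implicit Arguments. Unset Strict Implicit. Unset Printing Implicit Defensive.
Import GRing.Theory.
Local Open Scope classical_set_scope.
Local Open Scope ring_scope.

Lemma F2_cases (x : F2) : x = 0 \/ x = 1.
Proof. case: x => [[|[|n]] Hn]; [left|right|by []]; exact/val_inj. Qed.

Lemma F2_addrr (x : F2) : x + x = 0.
Proof. by case: (F2_cases x) => ->; apply/val_inj. Qed.

Lemma F2_neq_addr (x y : F2) : x <> y -> x + y = 1.
Proof. by case: (F2_cases x) => ->; case: (F2_cases y) => -> //; move=> _; apply/val_inj. Qed.

Lemma F2_addr_eq0 (x y : F2) : x + y = 0 -> x = y.
Proof. by case: (F2_cases x) => ->; case: (F2_cases y) => -> //; move/(congr1 val). Qed.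

Section NatFsum.
Variable R : nmodType.
Implicit Types F : nat -> R.

Lemma fsum_nat_ord m F : (forall k, (m <= k)%N -> F k = 0) ->
  \sum_(k \in [set: nat]) F k = \sum_(k < m) F k.
Proof.
move=> F0; rewrite fsbig_ord; apply/esym/fsbig_widen => // k [_].
by move=> /negP; rewrite /= -leqNgt => /F0.
Qed.

Lemma fsum_nat1 i F : (forall k, k != i -> F k = 0) ->
  \sum_(k \in [set: nat]) F k = F i.
Proof.
move=> F0; rewrite -(fsbig_widen [set i]) ?fsbig_set1 // => k [_ ki].
by apply: F0; apply/eqP.
Qed.

Lemma fsum_nat2 i j F : i != j -> (forall k, k != i -> k != j -> F k = 0) ->
  \sum_(k \in [set: nat]) F k = F i + F j.
Proof.
move=> ij F0; rewrite (fsum_nat_ord (m := (maxn i j).+1)); last first.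
  by move=> k; rewrite gtn_max => /andP[ik jk]; apply: F0; rewrite neq_ltn ?ik ?jk orbT.
have lti : (i < (maxn i j).+1)%N by rewrite ltnS leq_maxl.
have ltj : (j < (maxn i j).+1)%N by rewrite ltnS leq_maxr.
rewrite (bigD1 (Ordinal lti)) // (bigD1 (Ordinal ltj)) /=; last first.
  by rewrite -(inj_eq val_inj) /= eq_sym.
rewrite big1 ?addr0 // => k /andP[ki kj].
by apply: F0; [move: ki | move: kj]; apply: contra => /eqP e; apply/eqP/val_inj.
Qed.

End NatFsum.

(** * Matrices bounded by m *)

Definition bnd_mx m (A : infmx) :=
  forall i j, (m <= i)%N \/ (m <= j)%N -> A i j = mx1 i j.
Definition bnd_vec m (v : infvec) := forall k, (m <= k)%N -> v k = 0.

Lemma mx1_eq i : mx1 i i = 1. Proof. by rewrite /mx1 eqxx. Qed.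
Lemma mx1_neq i j : i != j -> mx1 i j = 0. Proof. by rewrite /mx1 => /negbTE ->. Qed.

Lemma bnd_mx_mono m n A : (m <= n)%N -> bnd_mx m A -> bnd_mx n A.
Proof. by move=> mn Am i j [h|h]; apply: Am; [left|right]; apply: leq_trans h. Qed.

Lemma bnd_vec_mono m n v : (m <= n)%N -> bnd_vec m v -> bnd_vec n v.
Proof. by move=> mn vm k h; apply: vm; apply: leq_trans h. Qed.

Lemma bnd_mx1 m : bnd_mx m mx1. Proof. by []. Qed.

Lemma finitary_bnd A : finitary A -> exists m, bnd_mx m A.
Proof.
move=> /finite_seqP [s Es]; exists (\max_(x <- s) maxn x.1 x.2).+1 => i j ij.
apply/eqP; apply: contraT => Aij.
have : [set` s] (i, j) by rewrite -Es.
move=> /(leq_bigmax_seq (P := xpredT) (F := fun x : nat * nat => maxn x.1 x.2)) /(_ isT).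
rewrite /= geq_max => /andP[im jm].
by case: ij; rewrite leqNgt ltnS ?im ?jm.
Qed.

Lemma bnd_mx_finitary m A : bnd_mx m A -> finitary A.
Proof.
move=> Am; apply: (sub_finite_set _ (finite_seq [seq (i, j) | i <- iota 0 m, j <- iota 0 m])).
move=> [i j] /= /eqP Aij; apply/allpairsP; exists (i, j); split => //=;
  rewrite mem_iota /= ltnNge; apply/negP => h; apply: Aij; apply: Am; by [left|right].
Qed.

Lemma finsupp_bnd v : finsupp v -> exists m, bnd_vec m v.
Proof.
move=> /finite_seqP [s Es]; exists (\max_(x <- s) x).+1 => k km.
apply/eqP; apply: contraT => vk.
have : [set` s] k by rewrite -Es.
by move=> /(leq_bigmax_seq (P := xpredT) (F := id)) /(_ isT) /= /(leq_trans km); rewrite ltnn.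
Qed.

Lemma bnd_vec_finsupp m v : bnd_vec m v -> finsupp v.
Proof.
move=> vm; apply: (sub_finite_set _ (finite_seq (iota 0 m))) => k /= /eqP vk.
by rewrite mem_iota /= ltnNge; apply/negP => h; apply: vk; apply: vm.
Qed.

Lemma bnd_mx_row m A i k : bnd_mx m A -> (maxn m i.+1 <= k)%N -> A i k = 0.
Proof.
rewrite geq_max => Am /andP[mk ik]; rewrite Am ?mx1_neq //; last by right.
by rewrite neq_ltn ik.
Qed.

Lemma mxmul1l A : mxmul mx1 A = A.
Proof.
apply/funext => i; apply/funext => j; rewrite /mxmul (@fsum_nat1 _ i) ?mx1_eq ?mul1r //.
by move=> k ki; rewrite mx1_neq ?mul0r // eq_sym.
Qed.

Lemma mxmul1r A : mxmul A mx1 = A.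
Proof.
apply/funext => i; apply/funext => j; rewrite /mxmul (@fsum_nat1 _ j) ?mx1_eq ?mulr1 //.
by move=> k kj; rewrite mx1_neq ?mulr0.
Qed.

Lemma mxact1 v : mxact mx1 v = v.
Proof.
apply/funext => i; rewrite /mxact (@fsum_nat1 _ i) ?mx1_eq ?mul1r //.
by move=> k ki; rewrite mx1_neq ?mul0r // eq_sym.
Qed.

Lemma mxact0 A : mxact A v0 = v0.
Proof. by apply/funext => i; rewrite /mxact fsbig1 // => k _; rewrite mulr0. Qed.

Lemma vadd0v v : vadd v0 v = v. Proof. by apply/funext => i; rewrite /vadd add0r. Qed.
Lemma vaddv0 v : vadd v v0 = v. Proof. by apply/funext => i; rewrite /vadd addr0. Qed.
Lemma vaddvv v : vadd v v = v0. Proof. by apply/funext => i; rewrite /vadd F2_addrr. Qed.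

Lemma mxmul_ord m A B i j : bnd_mx m A -> (i < m)%N ->
  mxmul A B i j = \sum_(k < m) A i k * B k j.
Proof.
move=> Am im; rewrite /mxmul (fsum_nat_ord (m := m)) // => k mk.
by rewrite (bnd_mx_row Am) ?mul0r // geq_max mk (leq_trans im mk).
Qed.

Lemma mxact_ord m A v i : bnd_mx m A -> (i < m)%N ->
  mxact A v i = \sum_(k < m) A i k * v k.
Proof.
move=> Am im; rewrite /mxact (fsum_nat_ord (m := m)) // => k mk.
by rewrite (bnd_mx_row Am) ?mul0r // geq_max mk (leq_trans im mk).
Qed.

Lemma bnd_mxmul m A B : bnd_mx m A -> bnd_mx m B -> bnd_mx m (mxmul A B).
Proof.
move=> Am Bm i j ij; case: (ltnP i m) => im.
  have mj : (m <= j)%N by case: ij; rewrite leqNgt ?im.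
  rewrite (mxmul_ord _ _ Am im) big1 ?mx1_neq ?neq_ltn ?(leq_trans im mj) // => k _.
  by rewrite Bm; [rewrite mx1_neq ?mulr0 // neq_ltn (leq_trans (ltn_ord k) mj) | right].
rewrite /mxmul (@fsum_nat1 _ i) => [|k ki]; last first.
  by rewrite Am ?mx1_neq ?mul0r 1?eq_sym //; left.
by rewrite Am ?mx1_eq ?mul1r ?Bm //; left.
Qed.

Lemma bnd_mxact m A v : bnd_mx m A -> bnd_vec m v -> bnd_vec m (mxact A v).
Proof.
move=> Am vm i mi; rewrite /mxact fsbig1 // => k _.
case: (eqVneq k i) => [->|ki]; first by rewrite vm ?mulr0.
by rewrite Am ?mx1_neq ?mul0r 1?eq_sym //; left.
Qed.

Lemma mxmulA m A B C : bnd_mx m A -> bnd_mx m B -> bnd_mx m C ->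
  mxmul (mxmul A B) C = mxmul A (mxmul B C).
Proof.
move=> Am Bm Cm; have ABm := bnd_mxmul Am Bm; have BCm := bnd_mxmul Bm Cm.
apply/funext => i; apply/funext => j; case: (ltnP i m) => im; last first.
  by rewrite (bnd_mxmul ABm Cm) ?(bnd_mxmul Am BCm) //; left.
rewrite (mxmul_ord _ _ ABm im) (mxmul_ord _ _ Am im).
under eq_bigr => k _ do rewrite (mxmul_ord _ _ Am im) mulr_suml.
under [RHS]eq_bigr => k _ do rewrite (mxmul_ord _ _ Bm (ltn_ord k)) mulr_sumr.
by rewrite exchange_big; apply: eq_bigr => k _; apply: eq_bigr => l _; rewrite mulrA.
Qed.

Lemma mxactA m A B v : bnd_mx m A -> bnd_mx m B -> bnd_vec m v ->
  mxact (mxmul A B) v = mxact A (mxact B v).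
Proof.
move=> Am Bm vm; have ABm := bnd_mxmul Am Bm; have Bvm := bnd_mxact Bm vm.
apply/funext => i; case: (ltnP i m) => im; last first.
  by rewrite (bnd_mxact ABm vm) ?(bnd_mxact Am Bvm).
rewrite (mxact_ord _ ABm im) (mxact_ord _ Am im).
under eq_bigr => k _ do rewrite (mxmul_ord _ _ Am im) mulr_suml.
under [RHS]eq_bigr => k _ do rewrite (mxact_ord _ Bm (ltn_ord k)) mulr_sumr.
by rewrite exchange_big; apply: eq_bigr => k _; apply: eq_bigr => l _; rewrite mulrA.
Qed.

Lemma mxactD m A v w : bnd_mx m A -> mxact A (vadd v w) = vadd (mxact A v) (mxact A w).
Proof.
move=> Am; apply/funext => i; rewrite /vadd /mxact !(fsum_nat_ord (m := maxn m i.+1));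
  try by move=> k /(bnd_mx_row Am) ->; rewrite mul0r.
by rewrite -big_split; apply: eq_bigr => k _; rewrite mulrDr.
Qed.

Lemma mxmulDr_rank1 m A B w q : bnd_mx m A ->
  mxmul A (fun i j => B i j + w i * (j == q)%:R) =
  fun i j => mxmul A B i j + mxact A w i * (j == q)%:R.
Proof.
move=> Am; apply/funext => i; apply/funext => j; rewrite /mxmul /mxact.
rewrite !(fsum_nat_ord (m := maxn m i.+1)); try by move=> k /(bnd_mx_row Am) ->; rewrite mul0r.
by rewrite mulr_suml -big_split; apply: eq_bigr => k _; rewrite mulrDr mulrA.
Qed.

(** * Transvections *)

Definition unitv (a : nat) : infvec := fun i => (i == a)%:R.

Definition transv (u : infvec) (q : nat) : infmx :=
  fun i j => mx1 i j + u i * (j == q)%:R.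

Definition elem_mx (a b : nat) : infmx := transv (unitv a) b.

Lemma unitv_eq a : unitv a a = 1. Proof. by rewrite /unitv eqxx. Qed.
Lemma unitv_neq a b : a != b -> unitv a b = 0.
Proof. by rewrite /unitv eq_sym => /negbTE ->. Qed.

Lemma bnd_unitv m a : (a < m)%N -> bnd_vec m (unitv a).
Proof. by move=> am k mk; rewrite unitv_neq // neq_ltn (leq_trans am mk). Qed.

Lemma bnd_transv m u q : bnd_vec m u -> (q < m)%N -> bnd_mx m (transv u q).
Proof.
move=> um qm i j [mi|mj]; rewrite /transv; first by rewrite um // mul0r addr0.
by rewrite eqn_leq [(j <= q)%N]leqNgt (leq_trans qm mj) mulr0 addr0.
Qed.

Lemma bnd_elem m a b : (a < m)%N -> (b < m)%N -> bnd_mx m (elem_mx a b).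
Proof. by move=> am; apply: bnd_transv; apply: bnd_unitv. Qed.

Lemma mxmul_transvl u q A : mxmul (transv u q) A = fun i j => A i j + u i * A q j.
Proof.
apply/funext => i; apply/funext => j; rewrite /mxmul /transv.
have F0 k : k != i -> k != q -> (mx1 i k + u i * (k == q)%:R) * A k j = 0.
  move=> ki /negbTE kq; rewrite mx1_neq; last by rewrite eq_sym.
  by rewrite kq mulr0 addr0 mul0r.
case: (eqVneq i q) => [iq|iq].
  subst i; rewrite (@fsum_nat1 _ q) => [|k kq]; last exact: F0.
  by rewrite mx1_eq eqxx mulr1 mulrDl mul1r.
rewrite (fsum_nat2 iq F0) mx1_eq (negbTE iq) mx1_neq // eqxx.
by rewrite mulr0 addr0 mul1r mulr1 add0r.
Qed.

Lemma mxmul_elemr A a b : mxmul A (elem_mx a b) = fun i j => A i j + A i a * (j == b)%:R.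
Proof.
apply/funext => i; apply/funext => j; rewrite /mxmul /elem_mx /transv /unitv.
have F0 k : k != j -> k != a -> A i k * (mx1 k j + (k == a)%:R * (j == b)%:R) = 0.
  by move=> kj /negbTE ka; rewrite mx1_neq // ka mul0r addr0 mulr0.
case: (eqVneq j a) => [ja|ja].
  subst j; rewrite (@fsum_nat1 _ a) => [|k ka]; last exact: F0.
  by rewrite mx1_eq eqxx mul1r mulrDr mulr1.
rewrite (fsum_nat2 ja F0) mx1_eq (negbTE ja) mx1_neq 1?eq_sym // eqxx.
by rewrite mul0r addr0 mul1r mulr1 add0r.
Qed.

Lemma mxact_transv u q v : mxact (transv u q) v = fun i => v i + u i * v q.
Proof.
apply/funext => i; have := congr1 (fun A => A i 0%N) (mxmul_transvl u q (fun k _ => v k)).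
by rewrite /mxmul /mxact.
Qed.

Lemma mxact_unitv A a : mxact A (unitv a) = fun i => A i a.
Proof.
apply/funext => i; rewrite /mxact /unitv (@fsum_nat1 _ a) ?eqxx ?mulr1 //.
by move=> k /negbTE ->; rewrite mulr0.
Qed.

Lemma transv0 q : transv v0 q = mx1.
Proof. by apply/funext => i; apply/funext => j; rewrite /transv mul0r addr0. Qed.

Lemma transv_mul u w q : w q = 0 ->
  mxmul (transv u q) (transv w q) = transv (vadd u w) q.
Proof.
move=> wq; rewrite mxmul_transvl; apply/funext => i; apply/funext => j.
by rewrite /transv /vadd wq mul0r addr0 {2}/mx1 eq_sym mulrDl addrAC -addrA.
Qed.

Lemma transv_invol u q : u q = 0 -> mxmul (transv u q) (transv u q) = mx1.
Proof. by move=> uq; rewrite transv_mul // vaddvv transv0. Qed.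

Lemma elem_invol a b : a != b -> mxmul (elem_mx a b) (elem_mx a b) = mx1.
Proof. by move=> ab; rewrite transv_invol ?unitv_neq. Qed.

Lemma mxconj_transv m M M' u q : bnd_mx m M -> bnd_mx m M' -> mxmul M M' = mx1 ->
  (m <= q)%N -> mxmul M (mxmul (transv u q) M') = transv (mxact M u) q.
Proof.
move=> Mm M'm MM' mq; rewrite mxmul_transvl.
(* Row q of M' is e_q^T, since q lies outside the support of M'. *)
have -> : (fun i j => M' i j + u i * M' q j) = fun i j => M' i j + u i * (j == q)%:R.
  apply/funext => i; apply/funext => j; rewrite (M'm q j); last by left.
  by rewrite /mx1 eq_sym.
by rewrite (mxmulDr_rank1 _ _ _ Mm) MM'.
Qed.

Ltac eq_cases :=
  repeat match goal with
  | H : is_true (?x != ?y) |- context[?x == ?y] => rewrite (negbTE H)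
  | H : is_true (?x != ?y) |- context[?y == ?x] => rewrite (eq_sym y x) (negbTE H)
  | |- context[?x == ?x] => rewrite eqxx
  | |- context[?x == ?y] => case: (eqVneq x y) => [?|?]; [subst|]
  end.

Ltac F2_brute :=
  rewrite /transv /mx1 /unitv; eq_cases;
  repeat match goal with |- context[?u ?x] =>
    is_var u; lazymatch type of u with infvec => case: (F2_cases (u x)) => -> end end;
  by apply/val_inj.

Lemma elem_conj_transv s t u q : s != t -> s != q ->
  mxmul (mxmul (elem_mx s t) (transv u q)) (elem_mx s t) =
  transv (fun i => u i + u t * unitv s i) q.
Proof.
move=> st sq; rewrite mxmul_elemr /elem_mx mxmul_transvl.
by apply/funext => i; apply/funext => j; F2_brute.
Qed.

(* The Steinberg relation [t_ab, t_bc] = t_ac; each t_xy is its own inverse. *)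
Lemma elem_commutator a b c : a != b -> b != c -> a != c ->
  mxmul (elem_mx a b) (mxmul (mxmul (elem_mx b c) (elem_mx a b)) (elem_mx b c)) = elem_mx a c.
Proof.
move=> ab bc ac; rewrite mxmul_elemr /elem_mx !mxmul_transvl.
by apply/funext => i; apply/funext => j; F2_brute.
Qed.

(** * Gaussian elimination *)

Definition left_invertible (A : infmx) := exists B, finitary B /\ mxmul B A = mx1.

Lemma left_invertible_elem_l m A a b : bnd_mx m A -> (a < m)%N -> (b < m)%N -> a != b ->
  left_invertible A -> left_invertible (mxmul (elem_mx a b) A).
Proof.
move=> Am am bm ab [B [/finitary_bnd [n Bn] BA]].
have Tk := bnd_mx_mono (leq_maxl m n) (bnd_elem am bm).
have Ak := bnd_mx_mono (leq_maxl m n) Am; have Bk := bnd_mx_mono (leq_maxr m n) Bn.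
exists (mxmul B (elem_mx a b)); split; first exact: bnd_mx_finitary (bnd_mxmul Bk Tk).
by rewrite (mxmulA Bk Tk (bnd_mxmul Tk Ak)) -(mxmulA Tk Tk Ak) elem_invol // mxmul1l.
Qed.

Lemma left_invertible_elem_r m A a b : bnd_mx m A -> (a < m)%N -> (b < m)%N -> a != b ->
  left_invertible A -> left_invertible (mxmul A (elem_mx a b)).
Proof.
move=> Am am bm ab [B [/finitary_bnd [n Bn] BA]].
have Tk := bnd_mx_mono (leq_maxl m n) (bnd_elem am bm).
have Ak := bnd_mx_mono (leq_maxl m n) Am; have Bk := bnd_mx_mono (leq_maxr m n) Bn.
exists (mxmul (elem_mx a b) B); split; first exact: bnd_mx_finitary (bnd_mxmul Tk Bk).
by rewrite (mxmulA Tk Bk (bnd_mxmul Ak Tk)) -(mxmulA Bk Ak Tk) BA mxmul1l elem_invol.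
Qed.

Section Elimination.

Variable S : infmx -> Prop.
Hypothesis S1 : S mx1.
Hypothesis S_elem_l : forall a b A, a != b -> S A -> S (mxmul (elem_mx a b) A).
Hypothesis S_elem_r : forall a b A, a != b -> S A -> S (mxmul A (elem_mx a b)).

Lemma S_elem_lK m A a b : bnd_mx m A -> (a < m)%N -> (b < m)%N -> a != b ->
  S (mxmul (elem_mx a b) A) -> S A.
Proof.
move=> Am am bm ab /(S_elem_l ab); have Tm := bnd_elem am bm.
by rewrite -(mxmulA Tm Tm Am) elem_invol // mxmul1l.
Qed.

Lemma S_elem_rK m A a b : bnd_mx m A -> (a < m)%N -> (b < m)%N -> a != b ->
  S (mxmul A (elem_mx a b)) -> S A.
Proof.
move=> Am am bm ab /(S_elem_r ab); have Tm := bnd_elem am bm.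
by rewrite (mxmulA Am Tm Tm) elem_invol // mxmul1r.
Qed.

Section Step.

Variable m : nat.
Hypothesis IH : forall A, bnd_mx m A -> left_invertible A -> S A.

Lemma elim_row k A : bnd_mx m.+1 A -> left_invertible A ->
  (forall i, i != m -> A i m = 0) -> A m m = 1 ->
  (forall j, (k <= j < m)%N -> A m j = 0) -> S A.
Proof.
elim: k A => [|k IHk] A Am Ainv Acol Amm Arow.
  apply: IH Ainv => i j ij.
  case: (ltnP m i) => mi; first by apply: Am; left.
  case: (ltnP m j) => mj; first by apply: Am; right.
  case: ij => [im|jm].
    have -> : i = m by apply/eqP; rewrite eqn_leq mi im.
    case: (ltngtP j m) => [jm'||->]; last by rewrite Amm mx1_eq.
    - rewrite Arow ?jm' // mx1_neq //; by rewrite neq_ltn jm' orbT.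
    - by rewrite leqNgt => /negP.
  have -> : j = m by apply/eqP; rewrite eqn_leq mj jm.
  case: (eqVneq i m) => [->|im']; first by rewrite Amm mx1_eq.
  by rewrite Acol // mx1_neq.
case: (ltnP k m) => km; last first.
  by apply: IHk => // j /andP[kj jm]; move: (leq_trans km kj); rewrite leqNgt jm.
case: (F2_cases (A m k)) => Amk.
  apply: IHk => // j /andP[kj jm]; case: (ltngtP k j) => [kj'||<-] //.
  - by apply: Arow; rewrite kj' jm.
  - by rewrite leqNgt => /negP.
have mk : m != k by rewrite neq_ltn km orbT.
have km1 : (k < m.+1)%N by rewrite ltnS ltnW.
apply: (S_elem_rK Am (ltnSn m) km1 mk).
apply: IHk.
- exact: bnd_mxmul Am (bnd_elem (ltnSn m) km1).
- exact: (left_invertible_elem_r Am (ltnSn m) km1 mk Ainv).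
- by move=> i im; rewrite mxmul_elemr (negbTE mk) mulr0 addr0 Acol.
- by rewrite mxmul_elemr (negbTE mk) mulr0 addr0.
- move=> j /andP[kj jm]; rewrite mxmul_elemr.
  case: (eqVneq j k) => [->|jk]; first by rewrite Amk Amm mulr1 F2_addrr.
  by rewrite mulr0 addr0 Arow // jm andbT ltn_neqAle eq_sym jk kj.
Qed.

Lemma elim_col k A : bnd_mx m.+1 A -> left_invertible A -> A m m = 1 ->
  (forall i, (k <= i < m)%N -> A i m = 0) -> S A.
Proof.
elim: k A => [|k IHk] A Am Ainv Amm Acol.
  apply: (@elim_row m) => // [i im|j]; last by rewrite ltnNge andbN.
  case: (ltnP i m) => im'; first exact: Acol.
  by rewrite Am ?mx1_neq //; left; rewrite ltn_neqAle eq_sym im.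
case: (ltnP k m) => km; last first.
  by apply: IHk => // i /andP[ki im]; move: (leq_trans km ki); rewrite leqNgt im.
case: (F2_cases (A k m)) => Akm.
  apply: IHk => // i /andP[ki im]; case: (ltngtP k i) => [ki'||<-] //.
  - by apply: Acol; rewrite ki' im.
  - by rewrite leqNgt => /negP.
have km' : k != m by rewrite neq_ltn km.
have km1 : (k < m.+1)%N by rewrite ltnS ltnW.
apply: (S_elem_lK Am km1 (ltnSn m) km').
apply: IHk.
- exact: bnd_mxmul (bnd_elem km1 (ltnSn m)) Am.
- exact: (left_invertible_elem_l Am km1 (ltnSn m) km' Ainv).
- by rewrite mxmul_transvl (unitv_neq km') mul0r addr0.
- move=> i /andP[ki im]; rewrite mxmul_transvl.
  case: (eqVneq i k) => [->|ik]; first by rewrite unitv_eq Akm Amm mul1r F2_addrr.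
  rewrite unitv_neq ?mul0r ?addr0 1?eq_sym //; apply: Acol.
  by rewrite im andbT ltn_neqAle eq_sym ik ki.
Qed.

Lemma elim_step A : bnd_mx m.+1 A -> left_invertible A -> S A.
Proof.
move=> Am Ainv; have vacuous i : (m <= i < m)%N = false by rewrite ltnNge andbN.
case: (F2_cases (A m m)) => Amm; last by apply: (@elim_col m) => // i; rewrite vacuous.
have [[b bm Abm]|col0] := pselect (exists2 b, (b < m)%N & A b m = 1).
  have mb : m != b by rewrite neq_ltn bm orbT.
  have bm1 : (b < m.+1)%N by rewrite ltnS ltnW.
  apply: (S_elem_lK Am (ltnSn m) bm1 mb).
  apply: (@elim_col m) => [|||i]; rewrite ?vacuous //.
  - exact: bnd_mxmul (bnd_elem (ltnSn m) bm1) Am.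
  - exact: (left_invertible_elem_l Am (ltnSn m) bm1 mb Ainv).
  - by rewrite mxmul_transvl unitv_eq Amm Abm mul1r add0r.
have Acol k : A k m = 0.
  case: (ltngtP k m) => [km|mk|->] //.
  - by case: (F2_cases (A k m)) => // Akm; case: col0; exists k.
  - by rewrite Am ?mx1_neq //; [rewrite neq_ltn mk orbT | left].
(* Column m of A vanishes, so (B A) m m = 0 for every B. *)
case: Ainv => B [_ /(congr1 (fun C => C m m))].
by rewrite mx1_eq /mxmul fsbig1 => [/(congr1 val)|k _]; rewrite ?Acol ?mulr0.
Qed.

End Step.

Lemma left_invertible_inS m A : bnd_mx m A -> left_invertible A -> S A.
Proof.
elim: m A => [|m IH] A Am Ainv.
  by have -> : A = mx1 by apply/funext => i; apply/funext => j; apply: Am; left.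
exact: (elim_step IH Am Ainv).
Qed.

End Elimination.

(** * Normal subgroups of G *)

Lemma vec_neq0 (w : infvec) : w != v0 -> exists b, w b = 1.
Proof.
move=> /eqP w0; apply: contrapT => nw1; apply: w0; apply/funext => b.
by case: (F2_cases (w b)) => // wb; case: nw1; exists b.
Qed.

Lemma mx_neq1 (M : infmx) : M <> mx1 -> exists i j, M i j <> mx1 i j.
Proof.
move=> M1; apply: contrapT => nM; apply: M1; apply/funext => i; apply/funext => j.
by apply: contrapT => Mij; apply: nM; exists i, j.
Qed.

Lemma GLinf_bnd M : GLinf M ->
  exists m M', [/\ bnd_mx m M, bnd_mx m M', mxmul M M' = mx1 & mxmul M' M = mx1].
Proof.
move=> [/finitary_bnd [m Mm] [M' [/finitary_bnd [n M'n] [MM' M'M]]]].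
exists (maxn m n), M'; split => //.
  exact: bnd_mx_mono (leq_maxl m n) Mm.
exact: bnd_mx_mono (leq_maxr m n) M'n.
Qed.

Lemma inG_vec v : finsupp v -> inG (mx1, v).
Proof.
have fin1 := bnd_mx_finitary (@bnd_mx1 0).
by split => //; split => //; exists mx1; rewrite mxmul1l.
Qed.

Lemma inG_mx M : GLinf M -> inG (M, v0).
Proof. by split => //; apply: (@bnd_vec_finsupp 0). Qed.

Lemma inG_elem a b : a != b -> inG (elem_mx a b, v0).
Proof.
move=> ab; have am : (a < (maxn a b).+1)%N by rewrite ltnS leq_maxl.
have bm : (b < (maxn a b).+1)%N by rewrite ltnS leq_maxr.
have fin := bnd_mx_finitary (bnd_elem am bm).
by apply: inG_mx; split => //; exists (elem_mx a b); rewrite elem_invol.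
Qed.

Lemma Gmul_mx0 A B : Gmul (A, v0) (B, v0) = (mxmul A B, v0).
Proof. by rewrite /Gmul /= mxact0 vaddvv. Qed.

Lemma Gconj_vec T w : Gmul (Gmul (T, v0) (mx1, w)) (T, v0) = (mxmul T T, mxact T w).
Proof. by rewrite /Gmul /= mxmul1r mxact0 vadd0v vaddv0. Qed.

Lemma Gmul_vec v w : Gmul (mx1, v) (mx1, w) = (mx1, vadd v w).
Proof. by rewrite /Gmul /= mxmul1l mxact1. Qed.

Section NormalSubgroup.

Variable N : set Gt.
Hypothesis HN : normal_subgroup N.

Lemma N_inG g : N g -> inG g. Proof. by case: HN => sub *; apply: sub. Qed.

Lemma N_Ge : N Ge. Proof. by case: HN. Qed.

Lemma N_mul g h : N g -> N h -> N (Gmul g h). Proof. by case: HN => _ _ mul *; apply: mul. Qed.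

Lemma N_inv g h : N g -> inG h -> Gmul g h = Ge -> N h.
Proof. by case: HN => _ _ _ inv _; apply: inv. Qed.

Lemma N_conj_invol g h : N g -> inG h -> Gmul h h = Ge -> N (Gmul (Gmul h g) h).
Proof. by case: HN => _ _ _ _ conj Ng Gh hh; apply: conj. Qed.

Lemma N_conj_elem a b g : a != b -> N g ->
  N (Gmul (Gmul (elem_mx a b, v0) g) (elem_mx a b, v0)).
Proof. by move=> ab Ng; apply: N_conj_invol Ng (inG_elem ab) _; rewrite Gmul_mx0 elem_invol. Qed.

Lemma N_unitv w a b : N (mx1, w) -> w b = 1 -> a != b -> N (mx1, unitv a).
Proof.
move=> Nw wb ab; have := N_mul (N_conj_elem ab Nw) Nw.
rewrite Gconj_vec elem_invol // Gmul_vec; congr (N (_, _)); apply/funext => i.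
by rewrite /vadd /elem_mx mxact_transv wb mulr1 addrAC F2_addrr add0r.
Qed.

Lemma N_all_unitv w c : N (mx1, w) -> w != v0 -> N (mx1, unitv c).
Proof.
move=> Nw /vec_neq0 [b wb]; case: (eqVneq c b) => [->|cb]; last exact: N_unitv Nw wb cb.
have Sbb : b.+1 != b by rewrite neq_ltn ltnSn orbT.
by apply: (N_unitv (N_unitv Nw wb Sbb) (unitv_eq _)); rewrite eq_sym.
Qed.

Lemma Vsub_subN w : N (mx1, w) -> w != v0 -> Vsub `<=` N.
Proof.
move=> Nw w0; have Nbnd m v : bnd_vec m v -> N (mx1, v).
  elim: m v => [|m IH] v vm.
    have -> : v = v0 by apply/funext => k; apply: vm.
    exact: N_Ge.
  pose v' k := if k == m then 0 else v k.
  have Nv' : N (mx1, v').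
    apply: IH => k mk; rewrite /v'; case: eqVneq => // km; apply: vm.
    by rewrite ltn_neqAle eq_sym km.
  case: (F2_cases (v m)) => vm0.
    congr (N (_, _)): Nv'; apply/funext => k; rewrite /v'.
    by case: eqVneq => // ->.
  have := N_mul Nv' (N_all_unitv m Nw w0); rewrite Gmul_vec.
  congr (N (_, _)); apply/funext => k; rewrite /vadd /v' /unitv.
  by case: eqVneq => [->|]; rewrite ?vm0 ?add0r ?addr0.
move=> [M v] [[_ /finsupp_bnd [m vm]] /= M1]; rewrite M1; exact: Nbnd vm.
Qed.

(* The commutator of (M, v) with the translation e_j is the translation M^-1 e_j + e_j,
   which is nonzero as soon as column j of M differs from e_j. *)
Lemma N_translation M v : N (M, v) -> M <> mx1 -> exists w, N (mx1, w) /\ w != v0.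
Proof.
move=> NMv /mx_neq1 [i0 [j Mj]].
have [/= GM /finsupp_bnd [m1 vm1]] := N_inG NMv.
have [m2 [M' [Mm2 M'm2 MM' M'M]]] := GLinf_bnd GM.
pose n := maxn (maxn m1 m2) j.+1.
have [le1 le2 lej] : [/\ m1 <= n, m2 <= n & j < n]%N by rewrite /n !leq_max !leqnn ?orbT.
have [Mn M'n] := (bnd_mx_mono le2 Mm2, bnd_mx_mono le2 M'm2).
have [vn ejn] := (bnd_vec_mono le1 vm1, bnd_unitv lej).
have NM'v : N (M', mxact M' v).
  apply: N_inv NMv _ _; last by rewrite /Gmul /= MM' -(mxactA Mn M'n vn) MM' mxact1 vaddvv.
  split; last exact: bnd_vec_finsupp (bnd_mxact M'n vn).
  by split; [exact: bnd_mx_finitary M'n | exists M; split => //; exact: bnd_mx_finitary Mn].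
have Nconj : N (Gmul (Gmul (mx1, unitv j) (M, v)) (mx1, unitv j)).
  by apply: N_conj_invol NMv (inG_vec (bnd_vec_finsupp ejn)) _; rewrite Gmul_vec vaddvv.
exists (vadd (mxact M' (unitv j)) (unitv j)); split.
  have := N_mul NM'v Nconj; rewrite /Gmul /= mxmul1l mxmul1r mxact1 M'M.
  rewrite !(mxactD _ _ M'n) -(mxactA M'n Mn ejn) M'M mxact1.
  congr (N (_, _)); apply/funext => k.
  by rewrite /vadd [mxact M' (unitv j) k + _]addrC !addrA F2_addrr add0r.
apply/eqP => w0; have M'ej : mxact M' (unitv j) = unitv j.
  by apply/funext => k; apply: F2_addr_eq0; apply: (congr1 (fun w => w k) w0).
apply: Mj; have := mxactA Mn M'n ejn; rewrite MM' mxact1 M'ej mxact_unitv.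
by move=> /(congr1 (fun w => w i0)) /= <-.
Qed.

(* For q outside the support of M, M t_pq M^-1 t_pq = transv (M e_p + e_p) q. *)
Lemma N_transv M : N (M, v0) -> M <> mx1 ->
  exists u q t, [/\ N (transv u q, v0), bnd_vec q u & u t = 1].
Proof.
move=> NM /mx_neq1 [i0 [p Mp]].
have /GLinf_bnd [m [M' [Mm M'm MM' M'M]]] : GLinf M := (N_inG NM).1.
have pm : (p < m)%N by rewrite ltnNge; apply/negP => mp; apply: Mp; apply: Mm; right.
have pm1 : (p < m.+1)%N by apply: ltnW.
have [Mm1 M'm1] := (bnd_mx_mono (leqnSn m) Mm, bnd_mx_mono (leqnSn m) M'm).
have Tm1 := bnd_elem pm1 (ltnSn m).
have pq : p != m by rewrite neq_ltn pm.
have NM' : N (M', v0).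
  apply: N_inv NM (inG_mx _) _; last by rewrite Gmul_mx0 MM'.
  by split; [exact: bnd_mx_finitary M'm | exists M; split => //; exact: bnd_mx_finitary Mm].
exists (vadd (mxact M (unitv p)) (unitv p)), m, i0; split.
- have := N_mul NM (N_conj_elem pq NM'); rewrite !Gmul_mx0.
  rewrite -(mxmulA Mm1 (bnd_mxmul Tm1 M'm1) Tm1) (mxconj_transv _ Mm M'm MM' (leqnn m)).
  by rewrite /elem_mx transv_mul // unitv_neq.
- move=> k mk; have kp : k != p by rewrite neq_ltn (leq_trans pm mk) orbT.
  rewrite /vadd mxact_unitv /= Mm; last by left.
  by rewrite mx1_neq // unitv_neq ?addr0 // eq_sym.
- by rewrite /vadd mxact_unitv; apply: F2_neq_addr.
Qed.

Lemma N_elem_next u q t : N (transv u q, v0) -> bnd_vec q u -> u t = 1 ->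
  N (elem_mx q.+1 q, v0).
Proof.
move=> Nu uq ut.
have tq : (t < q)%N by rewrite ltnNge; apply/negP => /uq; rewrite ut => /(congr1 val).
have st : q.+1 != t by rewrite neq_ltn (ltn_trans tq (ltnSn q)) orbT.
have sq : q.+1 != q by rewrite neq_ltn ltnSn orbT.
have := N_mul Nu (N_conj_elem st Nu).
rewrite !Gmul_mx0 elem_conj_transv // transv_mul; last first.
  by rewrite ut mul1r (uq q) // unitv_neq ?add0r.
by congr (N (_, _)); apply/funext => i; apply/funext => j;
  rewrite /transv /vadd ut mul1r addrA F2_addrr add0r.
Qed.

Lemma N_elem_col a b c : N (elem_mx a b, v0) -> a != b -> b != c -> a != c ->
  N (elem_mx a c, v0).
Proof.
move=> Nab ab bc ac; have := N_mul Nab (N_conj_elem bc Nab).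
by rewrite !Gmul_mx0 elem_commutator.
Qed.

Lemma N_elem_row a b c : N (elem_mx a b, v0) -> a != b -> c != a -> c != b ->
  N (elem_mx c b, v0).
Proof.
move=> Nab ab ca cb; have := N_mul (N_conj_elem ca Nab) Nab.
rewrite !Gmul_mx0 elem_conj_transv // transv_mul; last exact: unitv_neq.
by congr (N (_, _)); apply/funext => i; apply/funext => j;
  rewrite /elem_mx /transv /vadd unitv_eq mul1r addrAC F2_addrr add0r.
Qed.

(* From t_sq to t_ab via t_sz and t_az, for an index z distinct from s, q, a and b. *)
Lemma N_all_elem s q a b : N (elem_mx s q, v0) -> s != q -> a != b -> N (elem_mx a b, v0).
Proof.
move=> Nsq sq ab; pose z := (maxn (maxn s q) (maxn a b)).+1.
have fresh x : (x <= maxn (maxn s q) (maxn a b))%N -> z != x.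
  by move=> xz; rewrite neq_ltn ltnS xz orbT.
have [zs zq za zb] : [/\ z != s, z != q, z != a & z != b].
  by split; apply: fresh; rewrite !leq_max leqnn ?orbT.
have Nsz : N (elem_mx s z, v0) by apply: N_elem_col Nsq sq _ _; rewrite eq_sym.
have Naz : N (elem_mx a z, v0).
  by case: (eqVneq a s) => [->//|as_]; apply: N_elem_row Nsz _ as_ _; rewrite eq_sym.
by apply: N_elem_col Naz _ zb ab; rewrite eq_sym.
Qed.

Lemma N_GLinf M : (forall a b, a != b -> N (elem_mx a b, v0)) -> GLinf M -> N (M, v0).
Proof.
move=> Nelem /GLinf_bnd [m [M' [Mm M'm _ M'M]]].
apply: (@left_invertible_inS (fun A => N (A, v0)) _ _ _ _ _ Mm).
- exact: N_Ge.
- by move=> a b A ab NA; rewrite -Gmul_mx0; apply: N_mul (Nelem _ _ ab) NA.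
- by move=> a b A ab NA; rewrite -Gmul_mx0; apply: N_mul NA (Nelem _ _ ab).
- by exists M'; split => //; exact: bnd_mx_finitary M'm.
Qed.

Lemma inG_subN M v : Vsub `<=` N -> N (M, v) -> M <> mx1 -> inG `<=` N.
Proof.
move=> VN NMv M1; have [_ /= vfin] := N_inG NMv.
have NM : N (M, v0).
  have := N_mul (VN (mx1, v) (conj (inG_vec vfin) erefl)) NMv.
  by rewrite /Gmul /= mxmul1l mxact1 vaddvv.
have [u [q [t [Nu uq ut]]]] := N_transv NM M1.
have Sqq : q.+1 != q by rewrite neq_ltn ltnSn orbT.
have Nelem a b : a != b -> N (elem_mx a b, v0).
  exact: N_all_elem (N_elem_next Nu uq ut) Sqq.
move=> [A w] [/= GA wfin].
have := N_mul (VN (mx1, w) (conj (inG_vec wfin) erefl)) (N_GLinf Nelem GA).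
by rewrite /Gmul /= mxmul1l mxact0 vaddv0.
Qed.

End NormalSubgroup.

Theorem lemma4p2 (N : set Gt) :
  normal_subgroup N -> N = [set Ge] \/ N = Vsub \/ N = inG.
Proof.
move=> HN.
have [[[M v] [Ng gne]] | trivN] := pselect (exists g, N g /\ g <> Ge); last first.
  left; apply/seteqP; split => [g Ng | _ ->]; last exact: N_Ge HN.
  by apply: contrapT => gne; apply: trivN; exists g.
have VN : Vsub `<=` N.
  have [M1|M1] := pselect (M = mx1).
    by subst M; apply: (Vsub_subN HN Ng); apply/eqP => v0E; apply: gne; rewrite v0E.
  by have [w [Nw w0]] := N_translation HN Ng M1; exact: (Vsub_subN HN Nw w0).
have [[M' [v' [NMv M1]]] | noM] := pselect (exists M v, N (M, v) /\ M <> mx1).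
  by right; right; apply/seteqP; split; [exact: N_inG HN | exact: (inG_subN HN VN NMv M1)].
right; left; apply/seteqP; split => // -[M' v'] NMv; split; first exact: (N_inG HN NMv).
by apply: contrapT => M1; apply: noM; exists M', v'.
Qed.
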